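(* Up to multiplication by a positive integer, every basic weight of a basic system of type $F_4$ is one of the following (coordinates $\lambda_k=\langle\lambda,e_k\rangle$): (1) $(F_4,2,2)$: $(2,0,-1,1)$, $(1,0,-2,1)$, $(0,-1,-2,1)$; (2) $(F_4,2,3)$: $(\tfrac32,\tfrac12,-\tfrac12,\tfrac12)$, $(1,0,-1,1)$, $(\tfrac12,\tfrac12,-\tfrac32,\tfrac12)$, $(\tfrac12,-\tfrac12,-\tfrac32,\tfrac12)$, $(-\tfrac12,-\tfrac12,-\tfrac32,\tfrac12)$; (3) $(F_4,3,2)$: $(2,1,0,-1)$, $(1,1,0,-2)$, $(1,0,-1,-2)$, $(0,1,-1,-2)$, $(-1,0,-1,-2)$; (4) $(F_4,3,3)$: $(1,1,0,-1)$, $(\tfrac12,\tfrac12,-\tfrac12,-\tfrac32)$, $(-\tfrac12,\tfrac12,-\tfrac12,-\tfrac32)$.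
   Context: $F_4$ is realized in $\mathbb R^4$ with orthonormal basis $e_1,\dots,e_4$ and standard inner product, simple roots $\alpha_1=e_2-e_3$, $\alpha_2=e_3-e_4$, $\alpha_3=e_4$, $\alpha_4=\tfrac12(e_1-e_2-e_3-e_4)$. Let $W$ be the Weyl group, $\alpha^\vee=2\alpha/\langle\alpha,\alpha\rangle$. A weight is integral if $\langle\lambda,\alpha^\vee\rangle\in\mathbb Z$ for all roots $\alpha$; $\overline\lambda$ is the dominant weight in $W\lambda$. For $I=\Delta\setminus\{\alpha_i\}$, $J=\Delta\setminus\{\alpha_j\}$, a basic weight of $(\Phi,i,j)$ is an integral $\lambda$ with $\langle\lambda,\alpha^\vee\rangle\in\mathbb Z_{>0}$ for all $\alpha\in I$ and $\{\alpha\in\Delta:\langle\overline\lambda,\alpha\rangle=0\}=J$; $(\Phi,i,j)$ is a basic system if it has a basic weight. *)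

(* F_4 realised in R^4 (R any real field), vectors as 'rV[R]_4;
   coordinate e_{k+1} is the column index k : 'I_4. *)
From HB Require Import structures.
From mathcomp Require Import all_boot all_order all_algebra.
Set Implicit Arguments. Unset Strict Implicit. Unset Printing Implicit Defensive.
Import Order.TTheory GRing.Theory Num.Theory.
Local Open Scope ring_scope.

Section F4.
Variable R : realFieldType.
Notation vec := 'rV[R]_4.

Definition v4 (a b c d : R) : vec := \row_(k < 4) nth 0 [:: a; b; c; d] k.

Definition evec (k : 'I_4) : vec := \row_(l < 4) (k == l)%:R.

Definition ip (u v : vec) : R := \sum_(k < 4) u 0 k * v 0 k.

Definition F4_root (v : vec) : Prop :=
  (exists (i : 'I_4) (s : bool), v = (-1) ^+ s *: evec i) \/
  (exists (i j : 'I_4) (s t : bool),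
      (i < j)%N /\ v = (-1) ^+ s *: evec i + (-1) ^+ t *: evec j) \/
  (exists f : 'I_4 -> bool, v = \row_(k < 4) ((-1) ^+ f k / 2)).

Definition coroot (a : vec) : vec := (2 / ip a a) *: a.

Definition simple_root (k : nat) : vec :=
  match k with
  | 1 => v4 0 1 (-1) 0
  | 2 => v4 0 0 1 (-1)
  | 3 => v4 0 0 0 1
  | _ => v4 (1/2) (-1/2) (-1/2) (-1/2)
  end.

Definition refl (a v : vec) : vec := v - ip v (coroot a) *: a.

(* mu lies in the Weyl group orbit W lam: W is generated by the reflections
   s_alpha, alpha a root *)
Definition in_W_orbit (lam mu : vec) : Prop :=
  exists s : seq vec, (forall a, a \in s -> F4_root a) /\ mu = foldr refl lam s.

Definition dominant (mu : vec) : Prop :=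
  forall k, (1 <= k <= 4)%N -> 0 <= ip mu (simple_root k).

Definition integral (lam : vec) : Prop :=
  forall a, F4_root a -> exists z : int, ip lam (coroot a) = z%:~R.

Definition basic_weight (i j : nat) (lam : vec) : Prop :=
  integral lam /\
  (forall k, (1 <= k <= 4)%N -> k != i -> 0 < ip lam (coroot (simple_root k))) /\
  (exists mu, in_W_orbit lam mu /\ dominant mu /\
     forall k, (1 <= k <= 4)%N -> (ip mu (simple_root k) = 0 <-> k != j)).

Definition F4_basic_list (i j : nat) : seq vec :=
  match i, j with
  | 2, 2 => [:: v4 2 0 (-1) 1; v4 1 0 (-2) 1; v4 0 (-1) (-2) 1]
  | 2, 3 => [:: v4 (3/2) (1/2) (-1/2) (1/2); v4 1 0 (-1) 1;
               v4 (1/2) (1/2) (-3/2) (1/2); v4 (1/2) (-1/2) (-3/2) (1/2);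
               v4 (-1/2) (-1/2) (-3/2) (1/2)]
  | 3, 2 => [:: v4 2 1 0 (-1); v4 1 1 0 (-2); v4 1 0 (-1) (-2);
               v4 0 1 (-1) (-2); v4 (-1) 0 (-1) (-2)]
  | 3, 3 => [:: v4 1 1 0 (-1); v4 (1/2) (1/2) (-1/2) (-3/2);
               v4 (-1/2) (1/2) (-1/2) (-3/2)]
  | _, _ => [::]
  end.

End F4.

(* A basic weight lam of (F4, i, j) is W-conjugate to a dominant weight whose
   stabiliser is generated by the simple reflections s_k, k <> j, i.e. to a
   positive multiple c w_j of the j-th fundamental weight, so lam = c (w w_j) for
   some w in W.  The W-orbits of the fundamental weights are finite (24, 96, 96
   and 24 vectors) and are computed exactly over Q; the positivity of
   <lam, alpha_k^v> for k <> i singles out the listed weights, and each of them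
   pairs to 1 with the coroot of some long root, so integrality forces c to be a
   positive integer. *)

From HB Require Import structures.
From mathcomp Require Import all_boot all_order all_algebra.
From mathcomp Require Import ring lra.
Import Order.TTheory GRing.Theory Num.Theory.
Local Open Scope ring_scope.

Lemma in_iota_1_4 k : (1 <= k <= 4)%N -> k \in iota 1 4.
Proof. by rewrite mem_iota. Qed.

Definition bools : seq bool := [:: true; false].

Lemma mem_bools b : b \in bools.
Proof. by case: b. Qed.

Lemma mem_iota_ord {n} (i : 'I_n) : (i : nat) \in iota 0 n.
Proof. by rewrite mem_iota ltn_ord. Qed.

Definition qip (p q : seq rat) : rat :=
  p`_0 * q`_0 + p`_1 * q`_1 + p`_2 * q`_2 + p`_3 * q`_3.

Definition qcoroot (a : seq rat) : seq rat :=
  let c := 2 / qip a a in mkseq (fun k => c * a`_k) 4.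

Definition qrefl (a v : seq rat) : seq rat :=
  let c := qip v (qcoroot a) in mkseq (fun k => v`_k - c * a`_k) 4.

Definition qcube (s : seq rat) : seq (seq rat) :=
  iter 4 (fun vs => [seq x :: v | x <- s, v <- vs]) [:: [::]].

(* The roots of F4 are exactly the vectors of norm 1 or 2 with coordinates in
   {0, +-1/2, +-1}; only the inclusion of the roots (F4_root_ratv) is used. *)
Definition qroots : seq (seq rat) :=
  [seq a <- qcube [:: -1; -1/2; 0; 1/2; 1] | qip a a \in [:: 1; 2]].

Lemma qroots_norm a : a \in qroots -> qip a a \in [:: 1; 2].
Proof. by rewrite mem_filter => /andP[]. Qed.

Definition qunit (i : nat) (s : bool) : seq rat :=
  mkseq (fun k => (-1) ^+ s * (i == k)%:R) 4.

Definition qpair (i j : nat) (s t : bool) : seq rat :=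
  mkseq (fun k => (-1) ^+ s * (i == k)%:R + (-1) ^+ t * (j == k)%:R) 4.

Definition qhalf (b0 b1 b2 b3 : bool) : seq rat :=
  [seq (-1) ^+ b / 2 | b : bool <- [:: b0; b1; b2; b3]].

Lemma qunit_root (i : 'I_4) s : qunit i s \in qroots.
Proof.
have roots : all (fun i => all (fun s => qunit i s \in qroots) bools) (iota 0 4)
  by vm_compute.
by move/allP/(_ _ (mem_iota_ord i))/allP/(_ _ (mem_bools s)): roots.
Qed.

Lemma qpair_root (i j : 'I_4) s t : (i < j)%N -> qpair i j s t \in qroots.
Proof.
have roots : all (fun i => all (fun j => (i < j)%N ==> all (fun s => all (fun t =>
  qpair i j s t \in qroots) bools) bools) (iota 0 4)) (iota 0 4) by vm_compute.
move/allP/(_ _ (mem_iota_ord i))/allP/(_ _ (mem_iota_ord j))/implyP: roots.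
by move=> /[apply]/allP/(_ _ (mem_bools s))/allP/(_ _ (mem_bools t)).
Qed.

Lemma qhalf_root b0 b1 b2 b3 : qhalf b0 b1 b2 b3 \in qroots.
Proof.
have roots : all (fun b0 => all (fun b1 => all (fun b2 => all (fun b3 =>
  qhalf b0 b1 b2 b3 \in qroots) bools) bools) bools) bools by vm_compute.
move/allP/(_ _ (mem_bools b0))/allP/(_ _ (mem_bools b1)): roots.
by move/allP/(_ _ (mem_bools b2))/allP/(_ _ (mem_bools b3)).
Qed.

Definition qsimple (k : nat) : seq rat :=
  match k with
  | 1 => [:: 0; 1; -1; 0]
  | 2 => [:: 0; 0; 1; -1]
  | 3 => [:: 0; 0; 0; 1]
  | _ => [:: 1/2; -1/2; -1/2; -1/2]
  end.

Definition qfund_weight (j : nat) : seq rat :=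
  match j with
  | 1 => [:: 1; 1; 0; 0]
  | 2 => [:: 2; 1; 1; 0]
  | 3 => [:: 3/2; 1/2; 1/2; 1/2]
  | _ => [:: 1; 0; 0; 0]
  end.

Lemma qfund_weight_dual j k : (1 <= j <= 4)%N -> (1 <= k <= 4)%N ->
  qip (qfund_weight j) (qcoroot (qsimple k)) = (j == k)%:R.
Proof.
have dual : all (fun j => all (fun k =>
  qip (qfund_weight j) (qcoroot (qsimple k)) == (j == k)%:R) (iota 1 4)) (iota 1 4)
  by vm_compute.
move=> /in_iota_1_4 hj /in_iota_1_4 hk.
by move/allP/(_ _ hj)/allP/(_ _ hk)/eqP: dual.
Qed.

(* New vectors are deduplicated against the accumulator rather than with
   [undup], which would compare each of them with all the later ones. *)
Definition qorbit_step (s : seq (seq rat)) : seq (seq rat) :=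
  foldr (fun v acc => if v \in acc then acc else v :: acc) s
    [seq qrefl a v | a <- qroots, v <- s].

(* Two steps already reach the whole W-orbit of a fundamental weight, as
   qorbit_fund_closed certifies. *)
Definition qorbit (v : seq rat) : seq (seq rat) := iter 2 qorbit_step [:: v].

Lemma mem_qorbit_self v : v \in qorbit v.
Proof.
have step_sub s : {subset s <= qorbit_step s}.
  move=> x x_s; rewrite /qorbit_step; elim: [seq qrefl a v | a <- qroots, v <- s] => //= y l.
  by case: ifP => // _; rewrite inE => ->; rewrite orbT.
by apply/step_sub/step_sub; rewrite inE.
Qed.

Lemma qorbit_fund_closed j a q : (1 <= j <= 4)%N -> a \in qroots ->
  q \in qorbit (qfund_weight j) -> qrefl a q \in qorbit (qfund_weight j).
Proof.
have closed : all (fun j => let O := qorbit (qfund_weight j) in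
  all (fun a => all (fun q => qrefl a q \in O) O) qroots) (iota 1 4) by vm_compute.
move=> /in_iota_1_4 hj a_root q_orb.
by move/allP/(_ _ hj)/allP/(_ _ a_root)/allP/(_ _ q_orb): closed.
Qed.

Definition qpositive (i : nat) (q : seq rat) : bool :=
  all (fun k => (k == i) || (0 < qip q (qcoroot (qsimple k)))) (iota 1 4).

Definition qbasic_list (i j : nat) : seq (seq rat) :=
  match i, j with
  | 2, 2 => [:: [:: 2; 0; -1; 1]; [:: 1; 0; -2; 1]; [:: 0; -1; -2; 1]]
  | 2, 3 => [:: [:: 3/2; 1/2; -1/2; 1/2]; [:: 1; 0; -1; 1];
               [:: 1/2; 1/2; -3/2; 1/2]; [:: 1/2; -1/2; -3/2; 1/2];
               [:: -1/2; -1/2; -3/2; 1/2]]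
  | 3, 2 => [:: [:: 2; 1; 0; -1]; [:: 1; 1; 0; -2]; [:: 1; 0; -1; -2];
               [:: 0; 1; -1; -2]; [:: -1; 0; -1; -2]]
  | 3, 3 => [:: [:: 1; 1; 0; -1]; [:: 1/2; 1/2; -1/2; -3/2];
               [:: -1/2; 1/2; -1/2; -3/2]]
  | _, _ => [::]
  end.

Lemma qorbit_positive_basic {i j q} : (1 <= i <= 4)%N -> (1 <= j <= 4)%N ->
  q \in qorbit (qfund_weight j) -> qpositive i q -> q \in qbasic_list i j.
Proof.
have basic : all (fun j => all (fun i => all (fun q => qpositive i q ==> (q \in qbasic_list i j))
  (qorbit (qfund_weight j))) (iota 1 4)) (iota 1 4) by vm_compute.
move=> /in_iota_1_4 hi /in_iota_1_4 hj q_orb.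
by move/allP/(_ _ hj)/allP/(_ _ hi)/allP/(_ _ q_orb)/implyP: basic.
Qed.

(* Simple coroots would not do: (1, 0, -2, 1) pairs evenly with all of them. *)
Lemma qbasic_coroot_one {i j q} : (1 <= i <= 4)%N -> (1 <= j <= 4)%N ->
  q \in qbasic_list i j -> exists a b s t,
    (a < b < 4)%N /\ qip q (qcoroot (qpair a b s t)) = 1.
Proof.
have witness : all (fun i => all (fun j => all (fun q =>
  has (fun a => has (fun b => (a < b)%N && has (fun s => has (fun t =>
    qip q (qcoroot (qpair a b s t)) == 1) bools) bools) (iota 0 4)) (iota 0 4))
  (qbasic_list i j)) (iota 1 4)) (iota 1 4) by vm_compute.
move=> /in_iota_1_4 hi /in_iota_1_4 hj q_basic.
move/allP/(_ _ hi)/allP/(_ _ hj)/allP/(_ _ q_basic)/hasP: witness => [a _ /hasP[b]].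
rewrite mem_iota => /andP[_ lt_b4] /andP[lt_ab /hasP[s _ /hasP[t _ /eqP one]]].
by exists a, b, s, t; rewrite lt_ab.
Qed.

Section Realization.
Context {R : realFieldType}.
Notation vec := 'rV[R]_4.

Definition ratv (q : seq rat) : vec := \row_(k < 4) ratr q`_k.

Lemma ratv_v4 a b c d : ratv [:: a; b; c; d] = v4 (ratr a) (ratr b) (ratr c) (ratr d).
Proof. by apply/rowP => k; rewrite !mxE; case: k => [[|[|[|[|//]]]] ?]. Qed.

Lemma row4_eta (u : vec) :
  u = v4 (u 0 (inord 0)) (u 0 (inord 1)) (u 0 (inord 2)) (u 0 (inord 3)).
Proof.
apply/rowP => k; rewrite !mxE.
by case: k => [[|[|[|[|//]]]] ?] /=; congr (u _ _); apply: val_inj; rewrite /= inordK.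
Qed.

Lemma ip_v4 (a b c d a' b' c' d' : R) :
  ip (v4 a b c d) (v4 a' b' c' d') = a * a' + b * b' + c * c' + d * d'.
Proof. by rewrite /ip !big_ord_recr big_ord0 /= !mxE add0r. Qed.

Lemma ipZl c (u v : vec) : ip (c *: u) v = c * ip u v.
Proof. by rewrite /ip mulr_sumr; apply: eq_bigr => k _; rewrite mxE mulrA. Qed.

Lemma ipZr c (u v : vec) : ip u (c *: v) = c * ip u v.
Proof. by rewrite /ip mulr_sumr; apply: eq_bigr => k _; rewrite mxE mulrCA. Qed.

Lemma ipBl (u v w : vec) : ip (u - v) w = ip u w - ip v w.
Proof. by rewrite /ip -sumrB; apply: eq_bigr => k _; rewrite !mxE mulrBl. Qed.

Lemma ip_ratv p q : ip (ratv p) (ratv q) = ratr (qip p q).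
Proof. by rewrite /ip !big_ord_recr big_ord0 /= !mxE /qip !rmorphD !rmorphM add0r. Qed.

Lemma coroot_ratv a : coroot (ratv a) = ratv (qcoroot a).
Proof.
rewrite /coroot ip_ratv; apply/rowP => k; rewrite !mxE nth_mkseq //.
by rewrite rmorphM fmorph_div rmorph_nat.
Qed.

Lemma refl_ratv a v : refl (ratv a) (ratv v) = ratv (qrefl a v).
Proof.
rewrite /refl coroot_ratv ip_ratv; apply/rowP => k; rewrite !mxE nth_mkseq //.
by rewrite rmorphB rmorphM.
Qed.

Lemma reflZ a c (v : vec) : refl a (c *: v) = c *: refl a v.
Proof. by rewrite /refl ipZl scalerBr scalerA. Qed.

Lemma refl_involutive (a : vec) : ip a a != 0 -> involutive (refl a).
Proof.
move=> a_nz v; have ip_a_coroot : ip a (coroot a) = 2 by rewrite /coroot ipZr divfK.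
rewrite /refl ipBl ipZl ip_a_coroot.
have -> : ip v (coroot a) - ip v (coroot a) * 2 = - ip v (coroot a) by ring.
by rewrite scaleNr opprK subrK.
Qed.

Lemma qunit_ratv (i : 'I_4) (s : bool) : (-1) ^+ s *: evec R i = ratv (qunit i s).
Proof.
apply/rowP => k; rewrite !mxE nth_mkseq //.
by rewrite rmorphM rmorph_sign rmorph_nat.
Qed.

Lemma qpair_ratv (i j : 'I_4) (s t : bool) :
  (-1) ^+ s *: evec R i + (-1) ^+ t *: evec R j = ratv (qpair i j s t).
Proof.
apply/rowP => k; rewrite !mxE nth_mkseq //.
by rewrite rmorphD !rmorphM !rmorph_sign !rmorph_nat.
Qed.

Lemma qhalf_ratv (f : 'I_4 -> bool) :
  \row_(k < 4) ((-1) ^+ f k / 2) =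
  ratv (qhalf (f (inord 0)) (f (inord 1)) (f (inord 2)) (f (inord 3))).
Proof.
apply/rowP => k; rewrite !mxE.
have f_inord n (lt_n4 : (n < 4)%N) : f (Ordinal lt_n4) = f (inord n).
  by congr f; apply: val_inj; rewrite /= inordK.
by case: k => [[|[|[|[|//]]]] ?]; rewrite /= fmorph_div rmorph_sign rmorph_nat f_inord.
Qed.

Lemma F4_root_ratv (a : vec) : F4_root a -> exists2 a', a' \in qroots & a = ratv a'.
Proof.
case=> [[i [s ->]] | [[i [j [s [t [lt_ij ->]]]]] | [f ->]]].
- by exists (qunit i s); [apply: qunit_root | apply: qunit_ratv].
- by exists (qpair i j s t); [apply: qpair_root | apply: qpair_ratv].
- by eexists; [apply: qhalf_root | apply: qhalf_ratv].
Qed.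

Lemma F4_root_norm_gt0 (a : vec) : F4_root a -> 0 < ip a a.
Proof.
case/F4_root_ratv => a' /qroots_norm a'_norm ->; rewrite ip_ratv ltr0q.
by move: a'_norm; rewrite !inE => /orP[]/eqP->; rewrite ?ltr01 ?ltr0n.
Qed.

Lemma in_W_orbit_sym (lam mu : vec) : in_W_orbit lam mu -> in_W_orbit mu lam.
Proof.
case=> s [s_roots ->]; exists (rev s); split=> [a|]; first by rewrite mem_rev; apply: s_roots.
elim: s s_roots => //= a s IH s_roots.
have a_nz : ip a a != 0 by apply/lt0r_neq0/F4_root_norm_gt0/s_roots/mem_head.
rewrite rev_cons foldr_rcons (refl_involutive _ a_nz); apply: IH => b b_s.
by apply: s_roots; rewrite inE b_s orbT.
Qed.

Lemma in_W_orbit_stable (P : vec -> Prop) lam mu :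
  (forall a v, F4_root a -> P v -> P (refl a v)) -> in_W_orbit lam mu -> P lam -> P mu.
Proof.
move=> P_refl [s [s_roots ->]] P_lam; elim: s s_roots => //= a s IH s_roots.
apply: P_refl; first exact/s_roots/mem_head.
by apply: IH => b b_s; apply: s_roots; rewrite inE b_s orbT.
Qed.

Lemma in_W_orbit_qorbit {j c lam} : (1 <= j <= 4)%N ->
  in_W_orbit (c *: ratv (qfund_weight j)) lam ->
  exists2 q, q \in qorbit (qfund_weight j) & lam = c *: ratv q.
Proof.
move=> hj orbit_lam.
pose P v := exists2 q, q \in qorbit (qfund_weight j) & v = c *: ratv q.
apply: (@in_W_orbit_stable P _ _ _ orbit_lam).
  move=> _ _ /F4_root_ratv[a a_root ->] [q q_orb ->].
  exists (qrefl a q); first exact: qorbit_fund_closed.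
  by rewrite reflZ refl_ratv.
by exists (qfund_weight j); first exact: mem_qorbit_self.
Qed.

Lemma simple_root_ratv k : simple_root R k = ratv (qsimple k).
Proof.
by case: k => [|[|[|[|k]]]]; rewrite /= ratv_v4 ?(rmorph0, rmorph1, rmorphN, fmorph_div, rmorph_nat).
Qed.

Lemma simple_root_F4_root k : F4_root (simple_root R k).
Proof.
rewrite simple_root_ratv.
have alpha4 : F4_root (ratv (qsimple 0)).
  pose f (l : 'I_4) := l != 0 :> nat.
  by right; right; exists f; rewrite qhalf_ratv /f !inordK.
case: k => [|[|[|[|k]]]] //.
- right; left; exists (@Ordinal 4 1 isT), (@Ordinal 4 2 isT), false, true; split=> //.
  by rewrite qpair_ratv; congr ratv; apply/eqP; vm_compute.
- right; left; exists (@Ordinal 4 2 isT), (@Ordinal 4 3 isT), false, true; split=> //.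
  by rewrite qpair_ratv; congr ratv; apply/eqP; vm_compute.
- left; exists (@Ordinal 4 3 isT), false.
  by rewrite qunit_ratv; congr ratv; apply/eqP; vm_compute.
Qed.

Lemma ip_coroot_eq0 (a v : vec) : F4_root a -> (ip v (coroot a) == 0) = (ip v a == 0).
Proof.
move=> /F4_root_norm_gt0 a_gt0; have c_gt0 : 0 < 2 / ip a a by rewrite divr_gt0.
by rewrite ipZr mulf_eq0 (gt_eqF c_gt0).
Qed.

Lemma ip_coroot_gt0 (a v : vec) : F4_root a -> (0 < ip v (coroot a)) = (0 < ip v a).
Proof. by move=> /F4_root_norm_gt0 a_gt0; rewrite ipZr pmulr_rgt0 // divr_gt0. Qed.

Lemma orthogonal_simple_roots_eq0 (v : vec) :
  (forall k, (1 <= k <= 4)%N -> ip v (simple_root R k) = 0) -> v = 0.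
Proof.
move=> v_perp; move: (v_perp 1%N isT) (v_perp 2%N isT) (v_perp 3%N isT) (v_perp 4%N isT).
rewrite [v]row4_eta /simple_root !ip_v4.
move: (v 0 _) (v 0 _) (v 0 _) (v 0 _) => v0 v1 v2 v3 h1 h2 h3 h4.
by apply/rowP => k; rewrite !mxE; case: k => [[|[|[|[|//]]]] _] /=; lra.
Qed.

Lemma ip_fund_weight_coroot j k : (1 <= j <= 4)%N -> (1 <= k <= 4)%N ->
  ip (ratv (qfund_weight j)) (coroot (simple_root R k)) = (j == k)%:R.
Proof.
move=> hj hk; rewrite simple_root_ratv coroot_ratv ip_ratv qfund_weight_dual //.
exact: rmorph_nat.
Qed.

Lemma dominant_fund_multiple {j mu} : (1 <= j <= 4)%N -> dominant mu ->
  (forall k, (1 <= k <= 4)%N -> ip mu (simple_root R k) = 0 <-> k != j) ->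
  exists2 c, 0 < c & mu = c *: ratv (qfund_weight j).
Proof.
move=> hj mu_dom mu_zero; exists (ip mu (coroot (simple_root R j))).
  rewrite ip_coroot_gt0; last exact: simple_root_F4_root.
  rewrite lt_def mu_dom // andbT; apply/eqP => /(mu_zero j hj).
  by rewrite eqxx.
apply/subr0_eq/orthogonal_simple_roots_eq0 => k hk; apply/eqP.
rewrite -(ip_coroot_eq0 _ _ (simple_root_F4_root k)) ipBl ipZl ip_fund_weight_coroot //.
have [<-|kj] := eqVneq j k; first by rewrite mulr1n mulr1 subrr.
rewrite mulr0n mulr0 subr0 ip_coroot_eq0; last exact: simple_root_F4_root.
by apply/eqP/(mu_zero k hk); rewrite eq_sym.
Qed.

Lemma ipZ_ratv_coroot c q a :
  ip (c *: ratv q) (coroot (ratv a)) = c * ratr (qip q (qcoroot a)).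
Proof. by rewrite ipZl coroot_ratv ip_ratv. Qed.

Lemma qpositive_ratv {i c q} : 0 < c ->
  (forall k, (1 <= k <= 4)%N -> k != i -> 0 < ip (c *: ratv q) (coroot (simple_root R k))) ->
  qpositive i q.
Proof.
move=> c_gt0 pos; apply/allP => k; rewrite mem_iota => hk.
have [//|ki] := eqVneq k i; move: (pos k hk ki).
by rewrite simple_root_ratv ipZ_ratv_coroot pmulr_rgt0 // ltr0q.
Qed.

Lemma integral_scale_nat {c q} : 0 < c -> integral (c *: ratv q) ->
  (exists a b s t, (a < b < 4)%N /\ qip q (qcoroot (qpair a b s t)) = 1) ->
  exists2 n, (0 < n)%N & c = n%:R.
Proof.
move=> c_gt0 c_int [a [b [s [t [/andP[lt_ab lt_b4] one]]]]].
have lt_a4 := ltn_trans lt_ab lt_b4.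
have [|z] := c_int (ratv (qpair a b s t)).
  by right; left; exists (Ordinal lt_a4), (Ordinal lt_b4), s, t; rewrite qpair_ratv.
rewrite ipZ_ratv_coroot one rmorph1 mulr1 => c_z.
by move: c_gt0; rewrite c_z ltr0z; case: z {c_z} => // n n_gt0; exists n; rewrite ?pmulrn.
Qed.

Lemma basic_list_ratv i j : map ratv (qbasic_list i j) = F4_basic_list R i j.
Proof.
case: i => [|[|[|[|i]]]]; case: j => [|[|[|[|j]]]] //=; rewrite !ratv_v4;
  by rewrite ?(rmorph0, rmorph1, rmorphN, fmorph_div, rmorph_nat).
Qed.

End Realization.

Theorem theorem5p12 (R : realFieldType) (i j : nat) (lam : 'rV[R]_4) :
  (1 <= i <= 4)%N -> (1 <= j <= 4)%N ->
  basic_weight i j lam ->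
  exists (n : nat) (mu : 'rV[R]_4),
    (0 < n)%N /\ mu \in F4_basic_list R i j /\ lam = n%:R *: mu.
Proof.
move=> hi hj [lam_int [lam_pos [mu [lam_mu [mu_dom mu_zero]]]]].
have [c c_gt0 mu_eq] := dominant_fund_multiple hj mu_dom mu_zero.
move: lam_mu; rewrite mu_eq => /in_W_orbit_sym/(in_W_orbit_qorbit hj)[q q_orb lam_eq].
rewrite {}lam_eq in lam_int lam_pos *.
have q_basic : q \in qbasic_list i j.
  exact: qorbit_positive_basic hi hj q_orb (qpositive_ratv c_gt0 lam_pos).
have [n n_gt0 ->] := integral_scale_nat c_gt0 lam_int (qbasic_coroot_one hi hj q_basic).
exists n, (ratv q); split; first exact: n_gt0.
by split; first by rewrite -basic_list_ratv; apply: map_f.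
Qed.
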